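(* Let $G$ be the directed graph on nodes $v_1,\dots,v_n$ with edges $(v_i,v_{i+1})$ for $1\le i\le n-1$ and $(v_i,v_j)$ for all $1\le j<i\le n$. Let $q=1/\sqrt n$. There is an absolute constant $c>0$ such that the convergence time of the \textsc{Random Pick} process on $G$ started from a $q$-random state is at least $c/(q\ln n)^2=c\,n/(\ln n)^2$ with probability $1-o(1)$ as $n\to\infty$.
   Context: In a $q$-random state each node is independently colored (red or blue, arbitrarily) with probability $q$ and uncolored otherwise. \textsc{Random Pick} process: in each round every node with at least one out-neighbor picks an out-neighbor uniformly at random, independently; an uncolored node adopts the color of its pick if the pick is colored, and all other nodes keep their color. A state is stable if no uncolored node has a colored out-neighbor; the convergence time is the first round $t\ge0$ at which the state is stable. *)

From HB Require Import structures.
From mathcomp Require Import all_boot all_order all_algebra.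
From mathcomp Require Import mathcomp_extra boolp classical_sets reals exp.
Set Implicit Arguments. Unset Strict Implicit. Unset Printing Implicit Defensive.
Import Order.TTheory GRing.Theory Num.Theory.
Local Open Scope ring_scope.

(* Nodes v_1..v_n are represented by 'I_n, node i : 'I_n standing for v_{i+1}. *)
Definition edgeG (n : nat) : rel 'I_n :=
  fun i j => ((j : nat) == (i : nat).+1) || (j < i)%N.

(* A state: None = uncolored, Some b = colored (b = red/blue). *)
Definition cstate (n : nat) := 'I_n -> option bool.

Definition stable n (e : rel 'I_n) (s : cstate n) : bool :=
  [forall i, forall j, ((s i == None) && e i j) ==> (s j == None)].

Definition outdeg n (e : rel 'I_n) (i : 'I_n) : nat := #|[pred j | e i j]|.

(* One round of Random Pick, given the picks p (p i = out-neighbor picked by i;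
   irrelevant for nodes with no out-neighbor, for which p i = i is used). *)
Definition step n (s : cstate n) (p : {ffun 'I_n -> 'I_n}) : cstate n :=
  fun i => if s i is None then s (p i) else s i.

Definition pick_w (R : realType) n (e : rel 'I_n) (i j : 'I_n) : R :=
  if outdeg e i == 0%N then (j == i)%:R else (e i j)%:R / (outdeg e i)%:R.

Definition picks_w (R : realType) n m (e : rel 'I_n)
  (P : {ffun 'I_m -> {ffun 'I_n -> 'I_n}}) : R :=
  \prod_(t < m) \prod_(i < n) pick_w R e i (P t i).

(* q-random initial state: mask i = node i colored (independently, prob q);
   colored nodes get the (arbitrary) color col i. *)
Definition init n (col : 'I_n -> bool) (mask : {ffun 'I_n -> bool}) : cstate n :=
  fun i => if mask i then Some (col i) else None.

Definition init_w (R : realType) n (q : R) (mask : {ffun 'I_n -> bool}) : R :=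
  \prod_(i < n) (if mask i then q else 1 - q).

Definition state_at n m (s0 : cstate n)
  (P : {ffun 'I_m -> {ffun 'I_n -> 'I_n}}) (t : nat) : cstate n :=
  foldl (@step n) s0 (take t (codom P)).

Definition Pr (R : realType) n m (e : rel 'I_n) (q : R)
  (E : pred ({ffun 'I_n -> bool} * {ffun 'I_m -> {ffun 'I_n -> 'I_n}})) : R :=
  \sum_(w | E w) (init_w q w.1 * picks_w R e w.2).

(* Probability that the convergence time T (first t >= 0 with a stable state)
   satisfies T >= x, i.e. the states at all rounds t < x are unstable.  Only the
   rounds t <= truncn x matter, so m = (truncn x).+1 rounds of picks suffice. *)
Definition Pr_convtime_ge (R : realType) n (e : rel 'I_n) (col : 'I_n -> bool)
  (q x : R) : R :=
  let m := (Num.truncn x).+1 in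
  @Pr R n m e q (fun w => [forall t : 'I_m,
     ((t%:R : R) < x) ==> ~~ stable e (state_at (init col w.1) w.2 t)]).

From HB Require Import structures.
From mathcomp Require Import all_boot all_order all_algebra.
From mathcomp Require Import mathcomp_extra boolp classical_sets reals exp.
From mathcomp Require Import sequences zify ring lra.
Set Implicit Arguments. Unset Strict Implicit. Unset Printing Implicit Defensive.
Import Order.TTheory GRing.Theory Num.Theory.
Local Open Scope ring_scope.

(* Suppose v_1 .. v_z are uncolored.  Every out-neighbour of v_i, i < z, lies in this
   prefix, and v_z has z out-neighbours of which only v_(z+1) lies outside it.  So in
   one round the uncolored prefix loses at most its last node, with probability at
   most 1/z, and a prefix of length K is emptied within m rounds with probability at
   most C(m,K)/K! <= (m e^2 / K^2)^K.  While v_1 is uncolored and some node is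
   colored, the state is not stable.  For K ~ sqrt n / ln n and m ~ K^2 / (16 e^2)
   the three failure events (a colored node among v_1 .. v_K, no colored node at
   all, the prefix emptied) have probabilities at most K q, (1 - q)^n and 1/K. *)

Section ProductWeights.
Variable R : realType.

Lemma sum_ffun_prod_pred (I J : finType) (F : I -> J -> R) (P : I -> pred J) :
  \sum_(f : {ffun I -> J}) (\prod_i (P i (f i))%:R) * \prod_i F i (f i)
  = \prod_i \sum_(j | P i j) F i j.
Proof.
under [RHS]eq_bigr => i _ do rewrite big_mkcond /=.
rewrite bigA_distr_bigA; apply: eq_bigr => f _.
rewrite -big_split /=; apply: eq_bigr => i _.
by case: (P i (f i)); rewrite ?mul1r ?mul0r.
Qed.

Lemma sum_ffun_marginal (I J : finType) (F : I -> J -> R) (i0 : I) (P : pred J) :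
  (forall i, \sum_j F i j = 1) ->
  \sum_(f : {ffun I -> J}) (P (f i0))%:R * \prod_i F i (f i) = \sum_(j | P j) F i0 j.
Proof.
move=> F1.
transitivity (\sum_(f : {ffun I -> J})
    (\prod_i ((i == i0) ==> P (f i))%:R) * \prod_i F i (f i)).
  apply: eq_bigr => f _; congr (_ * _).
  by rewrite (bigD1 i0) //= eqxx big1 ?mulr1 // => i /negPf ->.
rewrite (sum_ffun_prod_pred F (fun i j => (i == i0) ==> P j)) (bigD1 i0) //= eqxx.
by rewrite [X in _ * X]big1 ?mulr1 // => i /negPf ->; exact: F1.
Qed.

Lemma sum_ffun_cons (T : finType) r (F : seq T -> R) (w : T -> R) :
  \sum_(P : {ffun 'I_r.+1 -> T}) F (codom P) * \prod_t w (P t)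
  = \sum_x w x * \sum_(Q : {ffun 'I_r -> T}) F (x :: codom Q) * \prod_t w (Q t).
Proof.
pose ffcons (xQ : T * {ffun 'I_r -> T}) : {ffun 'I_r.+1 -> T} :=
  [ffun t => if unlift ord0 t is Some t' then xQ.2 t' else xQ.1].
have consE xQ : (ffcons xQ ord0 = xQ.1) * (forall t, ffcons xQ (lift ord0 t) = xQ.2 t).
  by split=> [|t]; rewrite ffunE ?unlift_none ?liftK.
rewrite (reindex ffcons) /=; last first.
  exists (fun P => (P ord0, [ffun t => P (lift ord0 t)])) => [[x Q] _ | P _].
    by rewrite consE; congr pair; apply/ffunP => t; rewrite ffunE consE.
  by apply/ffunP => t; rewrite ffunE; case: unliftP => [t' ->|->]; rewrite ?ffunE.
rewrite -(pair_big xpredT xpredT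
  (fun x Q => F (codom (ffcons (x, Q))) * \prod_t w (ffcons (x, Q) t))) /=.
apply: eq_bigr => x _; rewrite mulr_sumr; apply: eq_bigr => Q _.
have -> : codom (ffcons (x, Q)) = x :: codom Q.
  rewrite !codomE enum_ordSl /= consE -map_comp; congr cons.
  by apply: eq_map => t /=; rewrite consE.
by rewrite big_ord_recl consE mulrCA; congr (_ * (_ * _)); apply: eq_bigr => t _; rewrite consE.
Qed.

End ProductWeights.

Section RandomPickWeights.
Variables (R : realType) (n : nat) (e : rel 'I_n).

Lemma pick_w_ge0 i j : 0 <= pick_w R e i j.
Proof. by rewrite /pick_w; case: ifP => _; rewrite ?ler0n // divr_ge0. Qed.

Lemma pick_w_sum i : \sum_j pick_w R e i j = 1.
Proof.
rewrite /pick_w; case: eqP => [_|/eqP d0].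
  by rewrite (bigD1 i) //= eqxx big1 ?addr0 // => j /negPf ->.
rewrite -mulr_suml -natr_sum.
have -> : (\sum_j e i j : nat) = outdeg e i.
  by rewrite /outdeg -sum1_card [RHS]big_mkcond; apply: eq_bigr => j _; rewrite inE.
by rewrite divff // pnatr_eq0.
Qed.

Lemma pick_w_edge i j : outdeg e i != 0%N -> pick_w R e i j != 0 -> e i j.
Proof. by rewrite /pick_w => /negPf ->; case: (e i j); rewrite ?mul0r ?eqxx. Qed.

Definition round_w (p : {ffun 'I_n -> 'I_n}) : R := \prod_i pick_w R e i (p i).

Lemma round_w_ge0 p : 0 <= round_w p.
Proof. by apply: prodr_ge0 => i _; exact: pick_w_ge0. Qed.

Lemma round_w_sum : \sum_p round_w p = 1.
Proof. by rewrite -(bigA_distr_bigA (pick_w R e)) big1 // => i _; exact: pick_w_sum. Qed.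

Lemma round_w_pick i j : \sum_(p : {ffun 'I_n -> 'I_n}) (p i == j)%:R * round_w p = pick_w R e i j.
Proof. by rewrite (sum_ffun_marginal i (pred1 j) pick_w_sum) big_pred1_eq. Qed.

Lemma picks_w_ge0 m (P : {ffun 'I_m -> {ffun 'I_n -> 'I_n}}) : 0 <= picks_w R e P.
Proof. by apply: prodr_ge0 => t _; exact: round_w_ge0. Qed.

Lemma picks_w_neq0_edge m (P : {ffun 'I_m -> {ffun 'I_n -> 'I_n}}) :
  (forall i, outdeg e i != 0%N) -> picks_w R e P != 0 -> forall t i, e i (P t i).
Proof.
move=> deg_gt0 PP t i; apply: pick_w_edge (deg_gt0 i) _.
apply: contraNneq PP => pick0; apply/prodf_eq0; exists t => //.
by apply/prodf_eq0; exists i => //; rewrite pick0.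
Qed.

Lemma picks_w_sum m : \sum_(P : {ffun 'I_m -> {ffun 'I_n -> 'I_n}}) picks_w R e P = 1.
Proof.
rewrite -(bigA_distr_bigA (fun _ => round_w)) big1 // => t _; exact: round_w_sum.
Qed.

End RandomPickWeights.

Section InitialWeights.
Variables (R : realType) (n : nat) (q : R).
Hypothesis q01 : 0 <= q <= 1.

Let colw (i : 'I_n) (b : bool) : R := if b then q else 1 - q.

Let colw_sum i : \sum_b colw i b = 1.
Proof. by rewrite big_bool /= addrC subrK. Qed.

Lemma init_w_ge0 (mask : {ffun 'I_n -> bool}) : 0 <= init_w q mask.
Proof.
by case/andP: q01 => q0 q1; apply: prodr_ge0 => i _; case: (mask i); rewrite // subr_ge0.
Qed.

Lemma init_w_sum : \sum_(mask : {ffun 'I_n -> bool}) init_w q mask = 1.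
Proof. by rewrite -(bigA_distr_bigA colw) big1 // => i _; exact: colw_sum. Qed.

Lemma init_w_colored i : \sum_(mask : {ffun 'I_n -> bool}) (mask i)%:R * init_w q mask = q.
Proof. by rewrite (sum_ffun_marginal i idfun colw_sum) big_mkcond big_bool /= addr0. Qed.

Lemma init_w_uncolored :
  \sum_(mask : {ffun 'I_n -> bool}) (\prod_i (~~ mask i)%:R) * init_w q mask = (1 - q) ^+ n.
Proof.
rewrite (sum_ffun_prod_pred colw (fun _ b => ~~ b)).
rewrite (eq_bigr (fun=> 1 - q)) ?prodr_const ?card_ord // => i _.
by rewrite big_mkcond big_bool /= add0r.
Qed.

End InitialWeights.

Section UnionBound.
Variables (R : realType) (n m : nat) (e : rel 'I_n) (q : R).
Hypothesis q01 : 0 <= q <= 1.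
Local Notation mask_t := {ffun 'I_n -> bool}.
Local Notation picks_t := {ffun 'I_m -> {ffun 'I_n -> 'I_n}}.

Lemma Pr_ge_union_bound (E : pred (mask_t * picks_t)) (A : pred mask_t) (B : pred picks_t) :
  (forall mask P, picks_w R e P != 0 -> A mask -> B P -> E (mask, P)) ->
  1 - (\sum_(mask : mask_t) (~~ A mask)%:R * init_w q mask
       + \sum_(P : picks_t) (~~ B P)%:R * picks_w R e P) <= Pr e q E.
Proof.
move=> ABE; rewrite /Pr.
set F := fun w : mask_t * picks_t => init_w q w.1 * picks_w R e w.2.
have pairF (G : mask_t -> picks_t -> R) :
    \sum_(w : mask_t * picks_t) G w.1 w.2 = \sum_mask \sum_P G mask P.
  by rewrite pair_big.
have F_sum : \sum_w F w = 1.
  rewrite (pairF (fun a b => init_w q a * picks_w R e b)).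
  by under eq_bigr do rewrite -mulr_sumr picks_w_sum mulr1; exact: init_w_sum.
have margA : \sum_w (~~ A w.1)%:R * F w = \sum_mask (~~ A mask)%:R * init_w q mask.
  rewrite (pairF (fun a b => (~~ A a)%:R * (init_w q a * picks_w R e b))).
  by under eq_bigr do rewrite -mulr_sumr -mulr_sumr picks_w_sum mulr1.
have margB : \sum_w (~~ B w.2)%:R * F w = \sum_(P : picks_t) (~~ B P)%:R * picks_w R e P.
  rewrite (pairF (fun a b => (~~ B b)%:R * (init_w q a * picks_w R e b))).
  under eq_bigr do under eq_bigr do rewrite mulrCA.
  by under eq_bigr do rewrite -mulr_sumr; rewrite -mulr_suml init_w_sum mul1r.
suff : \sum_(w | ~~ E w) F w
       <= \sum_w (~~ A w.1)%:R * F w + \sum_w (~~ B w.2)%:R * F w.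
  by rewrite margA margB; move: F_sum; rewrite (bigID E) /=; lra.
rewrite -big_split [leLHS]big_mkcond; apply: ler_sum => -[mask P] _ /=; rewrite -mulrDl.
have F_ge0 : 0 <= F (mask, P) by rewrite mulr_ge0 ?init_w_ge0 ?picks_w_ge0.
case: ifP => [nE|_]; last by rewrite mulr_ge0 ?addr_ge0.
have [->|FP] := eqVneq (F (mask, P)) 0; first by rewrite mulr0.
have PP : picks_w R e P != 0 by apply: contraNneq FP; rewrite /F /= => ->; rewrite mulr0.
apply: ler_peMl => //.
case: (A mask) (B P) (ABE mask P PP) nE => [] [] /= ABE' nE; first by rewrite ABE' in nE.
all: by rewrite ?add0r ?addr0 ?lerDl ?ler01.
Qed.

End UnionBound.

Section Front.
Variable n' : nat.
Local Notation n := n'.+1.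
Local Notation picks := {ffun 'I_n -> 'I_n}.

(* A lower bound on the length of the uncolored prefix after the round [p], given that
   it was at least [z] before. *)
Definition front_step (z : nat) (p : picks) : nat :=
  if (0 < z)%N && (p (inord z.-1) == z :> nat) then z.-1 else z.

Definition front (z : nat) (ps : seq picks) : nat := foldl front_step z ps.

Lemma front_step_le z p : (front_step z p <= z)%N.
Proof. by rewrite /front_step; case: ifP => // _; exact: leq_pred. Qed.

Lemma front_le z ps : (front z ps <= z)%N.
Proof. by elim: ps z => //= p ps IH z; exact: leq_trans (IH _) (front_step_le _ _). Qed.

Lemma uncolored_below_step (s : cstate n) z (p : picks) : (forall i, edgeG i (p i)) ->
  (forall i : 'I_n, (i < z)%N -> s i = None) ->
  forall i : 'I_n, (i < front_step z p)%N -> step s p i = None.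
Proof.
move=> p_edge s_below i i_lt; have i_lt_z := leq_trans i_lt (front_step_le z p).
rewrite /step s_below //; case/orP: (p_edge i) => [/eqP p_succ | p_lt]; last first.
  by apply: s_below; lia.
have [|z_le] := ltnP (p i) z; first exact: s_below.
have z_eq : z = i.+1 by lia.
by move: i_lt; rewrite /front_step z_eq /= inord_val p_succ eqxx; lia.
Qed.

Lemma uncolored_below_front (ps : seq picks) (s : cstate n) z :
  all (fun p : picks => [forall i, edgeG i (p i)]) ps ->
  (forall i : 'I_n, (i < z)%N -> s i = None) ->
  forall i : 'I_n, (i < front z ps)%N -> foldl (@step n) s ps i = None.
Proof.
elim: ps s z => [|p ps IH] //= s z /andP[/forallP p_edge ps_edge] s_below.
by apply: IH => //; exact: uncolored_below_step.
Qed.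

Lemma colored_persists (ps : seq picks) (s : cstate n) i :
  s i != None -> foldl (@step n) s ps i != None.
Proof. by elim: ps s => //= p ps IH s si; apply: IH; rewrite /step; case: (s i) si. Qed.

Lemma stable_uncolored (s : cstate n) :
  stable (@edgeG n) s -> s ord0 = None -> forall i, s i = None.
Proof.
move=> /forallP s_stable s0 i; elim: {i}(i : nat) {-2}i (erefl (i : nat)) => [|k IH] i ik.
  by rewrite (_ : i = ord0) //; apply: val_inj.
have k_lt : (k < n)%N by have := ltn_ord i; lia.
have := s_stable (inord k) => /forallP /(_ i) /implyP.
by rewrite IH ?inordK // eqxx /edgeG ik inordK // eqxx => /(_ isT) /eqP.
Qed.

Lemma outdeg_edgeG_gt0 : (0 < n')%N -> forall i : 'I_n, outdeg (@edgeG n) i != 0%N.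
Proof.
move=> n'_gt0 i; rewrite -lt0n; apply/card_gt0P.
have [i0|i_gt0] := eqVneq (i : nat) 0%N.
  by exists (inord 1); rewrite inE /edgeG inordK ?i0 //; lia.
by exists ord0; rewrite inE /edgeG /=; lia.
Qed.

Lemma outdeg_edgeG_ge k : (k.+1 < n)%N -> (k.+1 <= outdeg (@edgeG n) (inord k))%N.
Proof.
move=> k_lt; pose f (j : 'I_k.+1) : 'I_n := inord (if (j < k)%N then j : nat else k.+1).
have fE j : (f j : nat) = if (j < k)%N then j : nat else k.+1.
  by rewrite inordK //; move: (ltn_ord j); case: ifP; lia.
have f_inj : injective f.
  move=> j1 j2 /(congr1 val) /=; rewrite !fE => f12; apply: val_inj => /=.
  by move: f12 (ltn_ord j1) (ltn_ord j2); do 2 case: ifP; lia.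
rewrite -{1}(card_ord k.+1) -cardsT -(card_imset _ f_inj) /outdeg.
apply: subset_leq_card; apply/fintype.subsetP => _ /imsetP[j _ ->].
by rewrite inE /edgeG fE inordK; [case: ifP; move: (ltn_ord j) | ]; lia.
Qed.

End Front.

Section FrontBound.
Variables (R : realType) (n' : nat).
Local Notation n := n'.+1.
Local Notation e := (@edgeG n).

Definition front_bound (r z : nat) : R := 'C(r, z)%:R / z`!%:R.

Lemma front_bound_ge0 r z : 0 <= front_bound r z.
Proof. by rewrite divr_ge0 ?ler0n. Qed.

Lemma front_boundSS r k :
  front_bound r.+1 k.+1 = (k.+1%:R)^-1 * front_bound r k + front_bound r k.+1.
Proof.
rewrite /front_bound binS factS natrD natrM.
have k_fact : k`!%:R != 0 :> R by rewrite pnatr_eq0 -lt0n fact_gt0.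
by field; rewrite k_fact /= addrC natr1 pnatr_eq0.
Qed.

Lemma pick_w_succ_le k : (k.+1 < n)%N ->
  pick_w R e (inord k) (inord k.+1) <= (k.+1%:R)^-1.
Proof.
move=> k_lt; have deg_ge := outdeg_edgeG_ge k_lt.
rewrite /pick_w ifF; last by apply/negbTE; rewrite -lt0n; exact: leq_trans deg_ge.
rewrite /edgeG !inordK ?eqxx //=; last lia.
by rewrite mul1r lef_pV2 ?ler_nat // posrE ltr0n //; exact: leq_trans deg_ge.
Qed.

Lemma front_step_mean r z : (z <= n')%N ->
  \sum_p round_w R e p * front_bound r (front_step z p) <= front_bound r.+1 z.
Proof.
case: z => [|k] k_lt.
  rewrite (eq_bigr (fun p => round_w R e p * front_bound r 0)) //.
  by rewrite -big_distrl /= round_w_sum /front_bound !bin0 /= divr1 mulr1.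
have stepE (p : {ffun 'I_n -> 'I_n}) :
    front_step k.+1 p = if p (inord k) == inord k.+1 then k else k.+1.
  by rewrite /front_step /= -val_eqE /= inordK //; lia.
apply: le_trans (_ : \sum_(p : {ffun 'I_n -> 'I_n})
    ((p (inord k) == inord k.+1)%:R * round_w R e p * front_bound r k
    + round_w R e p * front_bound r k.+1) <= _).
  apply: ler_sum => p _; rewrite stepE.
  have := round_w_ge0 R e p; have := front_bound_ge0 r k; have := front_bound_ge0 r k.+1.
  by case: eqP => _; rewrite ?mul1r ?mul0r ?add0r // => *; rewrite lerDl mulr_ge0.
rewrite big_split /= -!big_distrl /= round_w_sum mul1r round_w_pick front_boundSS.
by rewrite lerD2r ler_wpM2r ?front_bound_ge0 // pick_w_succ_le.
Qed.

Lemma front_hits0_le r z : (z <= n')%N ->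
  \sum_(P : {ffun 'I_r -> {ffun 'I_n -> 'I_n}})
    (front z (codom P) == 0%N)%:R * picks_w R e P <= front_bound r z.
Proof.
elim: r z => [|r IH] z z_le.
  have codom0 (P : {ffun 'I_0 -> {ffun 'I_n -> 'I_n}}) : codom P = [::].
    by apply/size0nil; rewrite size_codom card_ord.
  under eq_bigr do rewrite codom0.
  rewrite -big_distrr /= picks_w_sum mulr1 /front_bound.
  by case: z {z_le} => [|z]; rewrite ?bin0 ?divr1 // bin0n /= mul0r.
rewrite (sum_ffun_cons r (fun ps => (front z ps == 0%N)%:R) (round_w R e)) /=.
apply: le_trans (front_step_mean r z_le); apply: ler_sum => p _.
apply: ler_wpM2l; first exact: round_w_ge0.
exact: IH (leq_trans (front_step_le _ _) z_le).
Qed.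

End FrontBound.

Section ConvergenceTimeBound.
Variables (R : realType) (n' : nat).
Local Notation n := n'.+1.
Local Notation e := (@edgeG n).

Definition good_mask (K : nat) (mask : {ffun 'I_n -> bool}) : bool :=
  [forall i : 'I_n, (i < K)%N ==> ~~ mask i] && [exists i, mask i].

Lemma bad_mask_le (q : R) K : 0 <= q <= 1 -> (K <= n)%N ->
  \sum_(mask : {ffun 'I_n -> bool}) (~~ good_mask K mask)%:R * init_w q mask
  <= K%:R * q + (1 - q) ^+ n.
Proof.
move=> q01 K_le.
apply: le_trans (_ : \sum_(mask : {ffun 'I_n -> bool})
   (\sum_(i : 'I_n | (i < K)%N) (mask i)%:R + \prod_i (~~ mask i)%:R) * init_w q mask <= _).
  apply: ler_sum => mask _; apply: ler_wpM2r; first exact: init_w_ge0.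
  have prod_ge0 : 0 <= \prod_i (~~ mask i)%:R :> R by exact: prodr_ge0.
  case: (pickP (fun i : 'I_n => (i < K)%N && mask i)) => [i /andP[iK mi] | none].
    apply: le_trans (_ : 1 <= _); first by rewrite lern1 leq_b1.
    by rewrite (bigD1 i) //= mi -addrA lerDl addr_ge0 ?sumr_ge0.
  rewrite /good_mask (_ : [forall i : 'I_n, (i < K)%N ==> ~~ mask i]) /=; last first.
    by apply/forallP => i; apply/implyP => iK; move: (none i); rewrite iK /= => ->.
  case: (boolP [exists i, mask i]) => [_|/existsPn none_col] /=.
    by rewrite addr_ge0 ?sumr_ge0.
  by rewrite [X in _ + X]big1 ?lerDr ?sumr_ge0 // => i _; rewrite (negPf (none_col i)).
under eq_bigr do rewrite mulrDl big_distrl.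
rewrite big_split /= init_w_uncolored // lerD2r exchange_big /=.
under eq_bigr do rewrite init_w_colored //.
by rewrite -(big_ord_widen _ (fun=> q) K_le) sumr_const card_ord mulr_natl.
Qed.

Lemma unstable_before_front_hits0 m col mask (P : {ffun 'I_m -> {ffun 'I_n -> 'I_n}}) K t :
  (forall t i, e i (P t i)) -> good_mask K mask -> front K (codom P) != 0%N ->
  ~~ stable e (state_at (init col mask) P t).
Proof.
move=> P_edge /andP[/forallP below /existsP[j mj]] front_gt0; apply/negP => st.
pose ps := take t (codom P).
have ps_edge : all (fun p : {ffun 'I_n -> 'I_n} => [forall i, e i (p i)]) ps.
  by apply/allP => p /mem_take /codomP[t' ->]; apply/forallP.
have init_below (i : 'I_n) : (i < K)%N -> init col mask i = None.
  by move: (below i) => /implyP /[apply]; rewrite /init => /negPf ->.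
have front_ps : (0 < front K ps)%N.
  have := front_le (front K ps) (drop t (codom P)).
  by rewrite /front -foldl_cat cat_take_drop; move: front_gt0; rewrite /front; lia.
have root_uncolored : foldl (@step n) (init col mask) ps ord0 = None.
  by apply: (uncolored_below_front ps_edge init_below).
have := stable_uncolored st root_uncolored j.
by apply/eqP/colored_persists; rewrite /init mj.
Qed.

Lemma Pr_convtime_ge_lb (q x : R) col K : (0 < n')%N -> (K <= n')%N -> 0 <= q <= 1 ->
  1 - (K%:R * q + (1 - q) ^+ n + front_bound R (Num.truncn x).+1 K)
  <= Pr_convtime_ge e col q x.
Proof.
move=> n'_gt0 K_le q01.
apply: le_trans (Pr_ge_union_bound q01 (A := good_mask K)
  (B := fun P => front K (codom P) != 0%N) _); last first.
  move=> mask P PP good front_gt0; apply/forallP => t; apply/implyP => _.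
  have P_edge := picks_w_neq0_edge (outdeg_edgeG_gt0 n'_gt0) PP.
  exact: unstable_before_front_hits0 P_edge good front_gt0.
rewrite lerD2l lerN2; apply: lerD; first by apply: bad_mask_le; rewrite // ltnW.
by under eq_bigr do rewrite negbK; exact: front_hits0_le.
Qed.

End ConvergenceTimeBound.

Section Estimates.
Variable R : realType.
Local Notation e1 := (expR (1 : R)).

Lemma ffact_le_expn m k : (m ^_ k <= m ^ k)%N.
Proof.
rewrite ffact_prod; apply: leq_trans (_ : \prod_(i < k) m <= _)%N.
  by apply: leq_prod => i _; exact: leq_subr.
by rewrite prod_nat_const card_ord.
Qed.

Lemma front_bound_le m K :
  front_bound R m K <= (m%:R * e1 ^+ 2 / K%:R ^+ 2) ^+ K.
Proof.
case: K => [|k]; first by rewrite /front_bound bin0 /= divr1 expr0.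
have f_gt0 : 0 < k.+1`!%:R :> R by rewrite ltr0n fact_gt0.
have bin_le : 'C(m, k.+1)%:R * k.+1`!%:R <= m%:R ^+ k.+1 :> R.
  by rewrite -natrM -natrX ler_nat bin_ffact ffact_le_expn.
have Kpow_gt0 : 0 < k.+1%:R ^+ k.+1 :> R by rewrite exprn_gt0 ?ltr0n.
(* K! >= (K / e)^K, from the exponential series *)
have inv_fact_le : (k.+1`!%:R)^-1 <= e1 ^+ k.+1 / k.+1%:R ^+ k.+1.
  rewrite ler_pdivlMr // mulrC -expRM_natl mulr1.
  by apply: le_trans (expR_ge1Dxn k (ler0n R k.+1)); rewrite lerDr.
apply: le_trans (_ : m%:R ^+ k.+1 * (k.+1`!%:R)^-1 ^+ 2 <= _).
  by rewrite /front_bound expr2 mulrA ler_wpM2r ?invr_ge0 ?(ltW f_gt0) // ler_pdivlMr.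
have -> : (m%:R * e1 ^+ 2 / k.+1%:R ^+ 2) ^+ k.+1
          = m%:R ^+ k.+1 * (e1 ^+ k.+1 / k.+1%:R ^+ k.+1) ^+ 2.
  by rewrite -mulrA exprMn -!expr_div_n -!exprM mulnC.
rewrite ler_wpM2l ?exprn_ge0 ?ler0n //.
by apply: lerXn2r; rewrite // nnegrE ?invr_ge0 ?(ltW f_gt0) // divr_ge0 ?exprn_ge0 ?expR_ge0 ?ler0n.
Qed.

Lemma front_bound_le_inv m K : (0 < K)%N ->
  2 * (m%:R * e1 ^+ 2) <= K%:R ^+ 2 -> front_bound R m K <= K%:R^-1.
Proof.
move=> K_gt0 mK; apply: le_trans (front_bound_le m K) _.
have K2_gt0 : 0 < K%:R ^+ 2 :> R by rewrite exprn_gt0 ?ltr0n.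
apply: le_trans (_ : (2^-1) ^+ K <= _).
  apply: lerXn2r; rewrite ?nnegrE ?invr_ge0 ?divr_ge0 ?mulr_ge0 ?exprn_ge0 ?ler0n ?expR_ge0 //.
  by rewrite ler_pdivrMr //; lra.
rewrite (exprVn (2 : R) K) lef_pV2 ?posrE ?exprn_gt0 ?ltr0n //.
by rewrite -natrX ler_nat ltnW // ltn_expl.
Qed.

Lemma expr_onesub_le_inv (q : R) n : 0 <= q <= 1 -> (1 - q) ^+ n <= (1 + n%:R * q)^-1.
Proof.
case/andP => q_ge0 q_le1.
apply: le_trans (_ : expR (- q) ^+ n <= _).
  by apply: lerXn2r; rewrite ?nnegrE ?subr_ge0 ?expR_ge0 // expR_ge1Dx.
have nq_ge0 : 0 <= n%:R * q by rewrite mulr_ge0.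
rewrite -expRM_natl mulrN expRN lef_pV2 ?posrE ?expR_gt0 ?expR_ge1Dx //.
by rewrite ltr_wpDr.
Qed.

Lemma sqrt_div_ln_ge (B t : R) : 1 <= B -> (4 * B) ^+ 4 <= t -> B <= Num.sqrt t / ln t.
Proof.
move=> B_ge1 Bt; set r := Num.sqrt (Num.sqrt t).
have t_gt0 : 0 < t by apply: lt_le_trans Bt; rewrite exprn_gt0 // mulr_gt0 //; lra.
have r_gt0 : 0 < r by rewrite !sqrtr_gt0.
have r2 : r ^+ 2 = Num.sqrt t by rewrite sqr_sqrtr ?sqrtr_ge0.
have r4 : t = r ^+ 4 by rewrite (exprM r 2 2) r2 sqr_sqrtr ?ltW.
have Br : 4 * B <= r.
  by rewrite -(@ler_pXn2r R 4%N) ?nnegrE ?(ltW r_gt0) // -?r4 //; lra.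
have ln_r_gt0 : 0 < ln r by apply: ln_gt0; lra.
have ln_r_lt : ln r < r := ln_sublinear r_gt0.
rewrite -r2 r4 lnXn // -mulr_natl ler_pdivlMr ?mulr_gt0 // expr2; nra.
Qed.

Lemma e1_ge2 : 2 <= e1.
Proof. by have := expR_ge1Dx (1 : R); rewrite (_ : 1 + 1 = 2 :> R) //; lra. Qed.

Lemma front_bound_le_eps (eps y : R) : 0 < eps -> 3 / eps + 4 * e1 <= y ->
  front_bound R (Num.truncn (y ^+ 2 / (16 * e1 ^+ 2))).+1 (Num.truncn y) <= eps / 3.
Proof.
move=> eps_gt0 y_ge; have eps3_gt0 : 0 < 3 / eps by rewrite divr_gt0.
have e1_ge := e1_ge2.
set x := y ^+ 2 / _; set K := Num.truncn y.
have /andP[Ky yK] : K%:R <= y < K.+1%:R by apply: truncn_itv; lra.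
have K_ge : 3 / eps <= K%:R by move: yK; rewrite -natr1; lra.
have K_gt0 : (0 < K)%N by rewrite -(ltr_nat R); lra.
have x_ge1 : 1 <= x.
  rewrite ler_pdivlMr ?mulr_gt0 ?exprn_gt0 ?expR_gt0 // mul1r.
  rewrite (_ : 16 = 4 ^+ 2) -?exprMn; last by rewrite -natrX.
  by apply: lerXn2r; rewrite ?nnegrE ?mulr_ge0 ?expR_ge0 //; lra.
have m_le : (Num.truncn x).+1%:R <= 2 * x by rewrite -natr1; have := truncn_le x; lra.
apply: le_trans (front_bound_le_inv K_gt0 _) _; last first.
  by rewrite -invf_div lef_pV2 ?posrE ?ltr0n.
apply: le_trans (_ : y ^+ 2 / 4 <= _).
  have xE : x * (16 * e1 ^+ 2) = y ^+ 2.
    by rewrite /x mulfVK ?mulf_neq0 ?expf_neq0 ?gt_eqF ?expR_gt0.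
  by have := ler_wpM2r (exprn_ge0 2 (expR_ge0 1)) m_le; nra.
have K_ge1 : 1 <= K%:R :> R by rewrite ler1n.
have y_le : y <= 2 * K%:R by move: yK; rewrite -natr1; lra.
rewrite ler_pdivrMr //; apply: le_trans (_ : (2 * K%:R) ^+ 2 <= _).
  by apply: lerXn2r; rewrite ?nnegrE //; lra.
by rewrite exprMn mulrC ler_wpM2l ?exprn_ge0 ?ler0n // expr2; lra.
Qed.

Lemma Pr_convtime_ge_tail (eps : R) n' col : 0 < eps ->
  3 / eps + 1 <= ln n'.+1%:R ->
  3 / eps + 4 * e1 <= Num.sqrt n'.+1%:R / ln n'.+1%:R ->
  let q := (Num.sqrt n'.+1%:R)^-1 in
  1 - eps <= Pr_convtime_ge (@edgeG n'.+1) col q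
               ((16 * e1 ^+ 2)^-1 / (q * ln n'.+1%:R) ^+ 2).
Proof.
move=> eps_gt0 L_ge y_ge /=; have eps3_gt0 : 0 < 3 / eps by rewrite divr_gt0.
have e1_ge := e1_ge2.
set s := Num.sqrt _ in y_ge *; set q := s^-1; set L := ln _ in L_ge y_ge *.
set y := s / L in y_ge.
have s_gt0 : 0 < s by rewrite sqrtr_gt0 ltr0n.
have L_gt0 : 0 < L by lra.
have y_le_s : y <= s by rewrite ler_pdivrMr // ler_peMr //; lra.
have s_le : s <= n'%:R.
  have : s * s = n'%:R + 1 by rewrite -expr2 sqr_sqrtr ?ler0n // -natr1.
  nra.
have /andP[Ky yK] : (Num.truncn y)%:R <= y < (Num.truncn y).+1%:R by apply: truncn_itv; lra.
have K_le : (Num.truncn y <= n')%N by rewrite -(ler_nat R); lra.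
have n'_gt0 : (0 < n')%N by rewrite -(ltr_nat R); lra.
have q01 : 0 <= q <= 1 by rewrite invr_ge0 ltW //= invf_le1 //; lra.
have -> : (16 * e1 ^+ 2)^-1 / (q * L) ^+ 2 = y ^+ 2 / (16 * e1 ^+ 2).
  by rewrite /q /y; field; rewrite !gt_eqF ?expR_gt0.
apply: le_trans (Pr_convtime_ge_lb _ col n'_gt0 K_le q01); rewrite lerD2l lerN2.
have front_small : (Num.truncn y)%:R * q <= eps / 3.
  apply: le_trans (_ : y / s <= _); first by rewrite ler_wpM2r // invr_ge0 ltW.
  by rewrite mulrAC divff ?gt_eqF // mul1r -invf_div lef_pV2 ?posrE //; lra.
have none_small : (1 - q) ^+ n'.+1 <= eps / 3.
  apply: le_trans (expr_onesub_le_inv _ q01) _.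
  rewrite (_ : n'.+1%:R * q = s); last first.
    by rewrite /q -[n'.+1%:R](@sqr_sqrtr R) ?ler0n // expr2 mulfK ?gt_eqF.
  by rewrite -invf_div lef_pV2 ?posrE ?addr_gt0 //; lra.
have := front_bound_le_eps eps_gt0 y_ge; lra.
Qed.

End Estimates.

Theorem mainTheorem14 (R : realType) :
  exists c : R, 0 < c /\
  forall col : forall n : nat, 'I_n -> bool,
  forall eps : R, 0 < eps ->
  exists N : nat, forall n : nat, (N <= n)%N ->
    let q : R := (Num.sqrt (n%:R))^-1 in
    1 - eps <= Pr_convtime_ge (@edgeG n) (col n) q (c / (q * ln (n%:R)) ^+ 2).
Proof.
exists (16 * expR 1 ^+ 2)^-1; split; first by rewrite invr_gt0 mulr_gt0 ?exprn_gt0 ?expR_gt0.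
move=> col eps eps_gt0; pose B := 3 / eps + 4 * expR (1 : R).
have B_ge1 : 1 <= B.
  have := e1_ge2 R; have : 0 < 3 / eps by rewrite divr_gt0.
  rewrite /B; lra.
exists (Num.truncn (expR (3 / eps + 1)) + Num.truncn ((4 * B) ^+ 4)).+1.
case=> [//|n'] n_ge.
have le_n (x : R) : (Num.truncn x < n'.+1)%N -> x <= n'.+1%:R.
  by move=> x_lt; apply/ltW/(lt_le_trans (truncnS_gt x)); rewrite ler_nat.
apply: Pr_convtime_ge_tail => //.
  by rewrite -[leLHS]expRK ler_ln ?posrE ?expR_gt0 ?ltr0n // le_n //; lia.
have B_le : (4 * B) ^+ 4 <= n'.+1%:R by apply: le_n; lia.
exact: sqrt_div_ln_ge B_ge1 B_le.
Qed.
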